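(* For $A\in\mathcal A_n$, the following are equivalent: (1) $A$ is (the permutation matrix of) a bigrassmannian permutation; (2) $A$ has exactly one essential point.
   Context: $\mathcal A_n$ is the set of $n\times n$ alternating sign matrices (entries in $\{-1,0,1\}$, partial row and column sums in $\{0,1\}$, full row and column sums $1$); a permutation $w\in S_n$ is identified with its permutation matrix (entry $1$ at $(i,w(i))$). A permutation $w\in S_n$ is bigrassmannian if there is exactly one $i\in[n-1]$ with $w^{-1}(i)>w^{-1}(i+1)$ and exactly one $j\in[n-1]$ with $w(j)>w(j+1)$. The corner sum matrix is $\widetilde A(i,j)=\sum_{p\le i,q\le j}a_{pq}$, with $\widetilde A(i,j)=0$ if $i=0$ or $j=0$. For $i<j$, $k<l$, $R_{ij}^{kl}=\{(p,q): i\le p<j,\ k\le q<l\}$ is an essential rectangle of $A$ if for all $(p,q)\in R_{ij}^{kl}$: $\widetilde A(p,k)=\widetilde A(p,k-1)$, $\widetilde A(p,l)=\widetilde A(p,l-1)+1$, $\widetilde A(i,q)=\widetilde A(i-1,q)$, $\widetilde A(j,q)=\widetilde A(j-1,q)+1$. An essential point is an essential rectangle with $j=i+1$, $l=k+1$. *)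

From HB Require Import structures.
From mathcomp Require Import all_boot all_order all_fingroup all_algebra.
Set Implicit Arguments. Unset Strict Implicit. Unset Printing Implicit Defensive.
Import Order.TTheory GRing.Theory Num.Theory.

Local Open Scope ring_scope.

(* Matrices are 'M[int]_n with 0-indexed rows/columns; the paper's row p
   (1-indexed) is our row p-1. *)

Definition is_asm (n : nat) (A : 'M[int]_n) : Prop :=
  [/\ forall i j, A i j \in [:: -1; 0; 1],
      forall i (j : 'I_n), (\sum_(q < n | (q <= j)%N) A i q) \in [:: 0; 1],
      forall (i : 'I_n) j, (\sum_(p < n | (p <= i)%N) A p j) \in [:: 0; 1],
      forall i, \sum_(q < n) A i q = 1
    & forall j, \sum_(p < n) A p j = 1].

(* Corner sum matrix, 1-indexed: cs A i j = sum_{p<=i, q<=j} a_pq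
   (0 when i = 0 or j = 0). *)
Definition cs (n : nat) (A : 'M[int]_n) (i j : nat) : int :=
  \sum_(p < n | (p < i)%N) \sum_(q < n | (q < j)%N) A p q.

Definition essential_rect (n : nat) (A : 'M[int]_n) (i j k l : nat) : Prop :=
  [&& (1 <= i)%N, (i < j)%N, (j <= n)%N, (1 <= k)%N, (k < l)%N & (l <= n)%N] /\
      forall p q, (i <= p < j)%N -> (k <= q < l)%N ->
        [/\ cs A p k = cs A p k.-1,
            cs A p l = cs A p l.-1 + 1,
            cs A i q = cs A i.-1 q
          & cs A j q = cs A j.-1 q + 1].

Definition essential_point (n : nat) (A : 'M[int]_n) (i k : nat) : Prop :=
  essential_rect A i i.+1 k k.+1.

Definition num_descents (n : nat) (w : 'S_n) : nat :=
  #|[set p : 'I_n * 'I_n | (val p.2 == (val p.1).+1) && (w p.2 < w p.1)%N]|.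

Definition bigrassmannian (n : nat) (w : 'S_n) : Prop :=
  num_descents w = 1%N /\ num_descents (w^-1)%g = 1%N.

From HB Require Import structures.
From mathcomp Require Import all_boot all_order all_fingroup all_algebra.
From mathcomp Require Import zify.
Set Implicit Arguments. Unset Strict Implicit. Unset Printing Implicit Defensive.
Import Order.TTheory GRing.Theory Num.Theory.
Local Open Scope ring_scope.

(* We work with the corner-sum function c = cs A and its discrete differences:
   hdiff (a partial column sum) and vdiff (a partial row sum), which take
   values in {0, 1} for an ASM, and the mixed difference mdiff, which recovers
   the entries of A.  An essential point is a condition on four differences.
   1. For any such c (record corner_like), a -1 entry at (P, Q) forces an
      essential point in some row >= P, and, if it lies in the topmost row
      containing a -1, another one in some row < P.  So an ASM with a unique
      essential point has no -1 entry and is a permutation matrix.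
   2. For A = perm_mx w, (i, k) is essential iff w(i-1) >= k > w(i) and
      w^-1(k-1) >= i > w^-1(k).  The rows of the essential points are thus
      exactly the (shifted) descents of w, and their columns those of w^-1.
   3. A relation is a singleton iff both its projections are; together with
      2. this says that w is bigrassmannian iff perm_mx w has exactly one
      essential point, and the theorem follows using 1. *)

(* Discrete differences of a function c : nat -> nat -> int, to be applied to
   corner-sum functions: hdiff is the increment in the column index (a partial
   column sum of the matrix), vdiff the increment in the row index (a partial
   row sum), and mdiff the mixed second difference (a matrix entry). *)
Definition hdiff (c : nat -> nat -> int) (i k : nat) : int := c i k - c i k.-1.
Definition vdiff (c : nat -> nat -> int) (i k : nat) : int := c i k - c i.-1 k.
Definition mdiff (c : nat -> nat -> int) (i k : nat) : int :=
  vdiff c i k - vdiff c i k.-1.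

Lemma mdiff_hdiff c i k : mdiff c i k = hdiff c i k - hdiff c i.-1 k.
Proof. rewrite /mdiff /vdiff /hdiff; lia. Qed.

Lemma vdiff_mono c i k m : (forall k, (1 <= k)%N -> 0 <= mdiff c i k) ->
  (k <= m)%N -> vdiff c i k <= vdiff c i m.
Proof.
move=> mdiff_ge0 /subnK <-; elim: (m - k)%N => [|d IH] //.
rewrite addSn; apply: le_trans IH _.
by have := mdiff_ge0 (d + k).+1 isT; rewrite /mdiff /=; lia.
Qed.

Lemma hdiff_mono c i k d :
  (forall i', (i < i' <= i + d)%N -> 0 <= mdiff c i' k) ->
  hdiff c i k <= hdiff c (i + d) k.
Proof.
elim: d => [|d IH] mdiff_ge0; first by rewrite addn0.
apply: le_trans (IH _) _.
  by move=> i' /andP[a b]; apply: mdiff_ge0; rewrite a /= addnS (leq_trans b).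
have := mdiff_ge0 (i + d).+1; rewrite addnS ltnS leq_addr leqnn => /(_ isT).
by rewrite mdiff_hdiff /=; lia.
Qed.

Record corner_like (n : nat) (c : nat -> nat -> int) : Prop := CornerLike {
  hdiff01 : forall i k, hdiff c i k = 0 \/ hdiff c i k = 1;
  vdiff01 : forall i k, vdiff c i k = 0 \/ vdiff c i k = 1;
  c_row0 : forall k, c 0%N k = 0;
  c_col0 : forall i, c i 0%N = 0;
  vdiff_full : forall i k, (1 <= i <= n)%N -> (n <= k)%N -> vdiff c i k = 1;
  hdiff_full : forall i k, (1 <= k <= n)%N -> (n <= i)%N -> hdiff c i k = 1 }.

Definition ess_pt (n : nat) (c : nat -> nat -> int) (i k : nat) : Prop :=
  [/\ (1 <= i < n)%N && (1 <= k < n)%N, hdiff c i k = 0, hdiff c i k.+1 = 1,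
      vdiff c i k = 0 & vdiff c i.+1 k = 1].

Section CornerLike.
Variables (n : nat) (c : nat -> nat -> int).
Hypothesis Hc : corner_like n c.

Lemma hdiff1 i k : hdiff c i k <> 0 -> hdiff c i k = 1.
Proof. by case: (hdiff01 Hc i k). Qed.

Lemma vdiff1 i k : vdiff c i k <> 0 -> vdiff c i k = 1.
Proof. by case: (vdiff01 Hc i k). Qed.

Lemma mdiff_neg P Q : mdiff c P Q = -1 ->
  [/\ vdiff c P Q = 0, vdiff c P Q.-1 = 1, hdiff c P Q = 0 & hdiff c P.-1 Q = 1].
Proof.
move=> He; have := mdiff_hdiff c P Q; rewrite He; move: He; rewrite /mdiff.
by case: (vdiff01 Hc P Q) => ->; case: (vdiff01 Hc P Q.-1) => ->;
   case: (hdiff01 Hc P Q) => ->; case: (hdiff01 Hc P.-1 Q) => -> //; lia.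
Qed.

(* If (i,k0) has both differences 0 and the next row is full (vdiff 1) on the
   column segment [k0, B), where B is past the end or hdiff c i B = 1, then
   row i carries an essential point: take the last column of the segment
   where both differences of row i still vanish. *)
Lemma ess_pt_in_row i k0 B : (1 <= i < n)%N -> (1 <= k0)%N -> (k0 < B)%N ->
  (B <= n.+1)%N -> hdiff c i k0 = 0 -> vdiff c i k0 = 0 ->
  (B = n.+1 \/ hdiff c i B = 1) ->
  (forall k, (k0 <= k < B)%N -> vdiff c i.+1 k = 1) -> exists k, ess_pt n c i k.
Proof.
move=> /andP[i1 iln] k01 k0B Bn hk0 vk0 HB next_row.
pose P k := [&& (k0 <= k)%N, (k < B)%N, hdiff c i k == 0 & vdiff c i k == 0].
have exP : exists k, P k by exists k0; rewrite /P leqnn k0B hk0 vk0 !eqxx.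
have ubP k : P k -> (k <= B)%N by case/and4P => _ /ltnW.
case: (ex_maxnP exP ubP) => k /and4P[k0k kB /eqP hk /eqP vk] kmax.
have kn : (k < n)%N.
  rewrite ltnNge; apply/negP => nk.
  by have := vdiff_full Hc (i:=i) (k:=k); rewrite i1 (ltnW iln) nk vk => /(_ isT isT).
exists k; split => //.
- by rewrite i1 iln kn andbT (leq_trans k01 k0k).
- have [kB'|kB'] := eqVneq k.+1 B.
    case: HB => [HB|<-]; last by rewrite kB'.
    by move: kn; rewrite -ltnS kB' HB ltnn.
  have kSB : (k.+1 < B)%N by rewrite ltn_neqAle kB' kB.
  have : ~~ P k.+1 by apply/negP => /kmax; rewrite ltnn.
  rewrite /P kSB (leq_trans k0k (leqnSn _)) /= negb_and.
  case/orP => /eqP H; first exact: hdiff1.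
  have := mdiff_hdiff c i k.+1; rewrite /mdiff /= vk (vdiff1 H).
  by case: (hdiff01 Hc i k.+1) => ->; case: (hdiff01 Hc i.-1 k.+1) => ->; lia.
- by apply: next_row; rewrite k0k kB.
Qed.

(* A -1 at (P,Q) forces an essential point in some row i >= P: maximize i + k
   over the points with i >= P where both differences vanish. *)
Lemma ess_pt_below P Q : (1 <= P <= n)%N -> (1 <= Q <= n)%N ->
  mdiff c P Q = -1 -> exists i k, (P <= i)%N /\ ess_pt n c i k.
Proof.
move=> /andP[P1 Pn] /andP[Q1 Qn] He.
have [vPQ _ hPQ _] := mdiff_neg He.
pose pr (x : 'I_n.+1 * 'I_n.+1) :=
  [&& (P <= x.1)%N, (1 <= x.2)%N, hdiff c x.1 x.2 == 0 & vdiff c x.1 x.2 == 0].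
have prPQ : pr (inord P, inord Q).
  by rewrite /pr /= !inordK ?ltnS // leqnn Q1 hPQ vPQ eqxx.
case: (arg_maxnP (fun x : 'I_n.+1 * 'I_n.+1 => (val x.1 + val x.2)%N) prPQ).
move=> [i k] /and4P[/= Pi k1 /eqP hik /eqP vik] imax.
have ilen : (i <= n)%N by rewrite -ltnS.
have klen : (k <= n)%N by rewrite -ltnS.
have i1 : (1 <= i)%N by apply: leq_trans Pi.
have iln : (i < n)%N.
  rewrite ltn_neqAle ilen andbT; apply/eqP => ein.
  by have := hdiff_full Hc (i:=i) (k:=k); rewrite hik k1 klen ein leqnn => /(_ isT isT).
have kln : (k < n)%N.
  rewrite ltn_neqAle klen andbT; apply/eqP => ein.
  by have := vdiff_full Hc (i:=i) (k:=k); rewrite vik i1 ilen ein leqnn => /(_ isT isT).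
(* a neighbour (x,y) with larger sum cannot satisfy pr *)
have not_both x y : (P <= x)%N -> (1 <= y)%N -> (x <= n)%N -> (y <= n)%N ->
    (i + k < x + y)%N -> hdiff c x y <> 0 \/ vdiff c x y <> 0.
  move=> Px y1 xn yn lt; have := imax (inord x, inord y); rewrite /pr /= !inordK ?ltnS //.
  rewrite Px y1 /=; case: eqP => hxy; case: eqP => vxy; try by [left | right].
  by move=> /(_ isT); rewrite leqNgt lt.
exists (val i), (val k); split => //; split => //.
- by rewrite i1 iln k1 kln.
- have [/hdiff1 //|/vdiff1 vk] := not_both i k.+1 Pi isT ilen kln (ltac:(lia)).
  have := mdiff_hdiff c i k.+1; rewrite /mdiff /= vk vik.
  by case: (hdiff01 Hc i k.+1) => ->; case: (hdiff01 Hc i.-1 k.+1) => ->; lia.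
- have [/hdiff1 hk|/vdiff1 //] := not_both i.+1 k (ltac:(lia)) k1 iln klen (ltac:(lia)).
  have := mdiff_hdiff c i.+1 k; rewrite /mdiff /= hk hik.
  by case: (vdiff01 Hc i.+1 k) => // ->; case: (vdiff01 Hc i.+1 k.-1) => ->; lia.
Qed.

Lemma full_row_segment P Q : vdiff c P Q.-1 = 1 ->
  exists q1, [/\ (1 <= q1 < Q)%N, vdiff c P q1.-1 = 0
               & forall k, (q1 <= k < Q)%N -> vdiff c P k = 1].
Proof.
move=> vPQ1; have vP0 : vdiff c P 0 = 0 by rewrite /vdiff !(c_col0 Hc) subrr.
have Q2 : (1 < Q)%N.
  by rewrite ltnNge; apply/negP => Q1; move: vPQ1; rewrite (_ : Q.-1 = 0%N) ?vP0; lia.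
pose Pq q := [&& (1 <= q)%N, (q < Q)%N & vdiff c P q.-1 == 0].
have exq : exists q, Pq q by exists 1%N; rewrite /Pq Q2 /= vP0 eqxx.
have ubq q : Pq q -> (q <= Q)%N by case/and3P => _ /ltnW.
case: (ex_maxnP exq ubq) => q1 /and3P[q11 q1Q /eqP vq1] qmax.
exists q1; split => [||k /andP[q1k kQ]]; rewrite ?q11 //.
have [e|ne] := eqVneq k.+1 Q; first by move: vPQ1; rewrite -e.
have kSQ : (k.+1 < Q)%N by rewrite ltn_neqAle ne kQ.
apply: vdiff1 => H.
by have := qmax k.+1; rewrite /Pq kSQ /= H eqxx => /(_ isT); lia.
Qed.

Lemma first_row_hitting_column p Q : hdiff c p Q = 1 ->
  exists p1, [/\ (1 <= p1 <= p)%N, hdiff c p1 Q = 1 & hdiff c p1.-1 Q = 0].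
Proof.
move=> hpQ; have exp : exists p, hdiff c p Q == 1 by exists p; rewrite hpQ.
case: (ex_minnP exp) => p1 /eqP hp1 pmin.
have p11 : (1 <= p1)%N.
  rewrite lt0n; apply/eqP => e; move: hp1.
  by rewrite e /hdiff !(c_row0 Hc) subrr => /eqP; rewrite eq_sym oner_eq0.
exists p1; split => //; first by rewrite p11 pmin ?hpQ.
case: (hdiff01 Hc p1.-1 Q) => // H.
by have := pmin p1.-1; rewrite H eqxx => /(_ isT); lia.
Qed.

(* A -1 at (P,Q) with no -1 in the rows above P forces an essential point in
   some row i < P.  Let [q1, Q) be the maximal segment left of Q on which row P
   is full; then column q1 is empty down to row P-1.  The first row p1 meeting
   column Q is empty up to column Q-1, hence (rows above P being monotone) up
   to column q1.  Taking the last row i < P whose prefix up to q1 is empty,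
   the next row is full from q1 on (up to Q if i+1 = P, to the end
   otherwise), and ess_pt_in_row applies. *)
Lemma ess_pt_above P Q : (1 <= P <= n)%N -> (1 <= Q <= n)%N ->
  mdiff c P Q = -1 ->
  (forall i k, (1 <= i < P)%N -> (1 <= k)%N -> 0 <= mdiff c i k) ->
  exists i k, (i < P)%N /\ ess_pt n c i k.
Proof.
move=> /andP[P1 Pn] /andP[Q1 Qn] He mdiff_ge0.
have [_ vPQ1 _ hPQ1] := mdiff_neg He.
have [q1 [/andP[q11 q1Q] vq1 rowP]] := full_row_segment vPQ1.
have hq1 : hdiff c P.-1 q1 = 0.
  have := mdiff_hdiff c P q1; rewrite /mdiff vq1 (rowP q1) ?leqnn ?q1Q //.
  by have := hdiff01 Hc P q1; have := hdiff01 Hc P.-1 q1; lia.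
have [p1 [/andP[p11 p1P] hp1 hp10]] := first_row_hitting_column hPQ1.
have vp1 : vdiff c p1 q1 = 0.
  have vp1Q : vdiff c p1 Q.-1 = 0.
    have := mdiff_hdiff c p1 Q; rewrite /mdiff hp1 hp10.
    by have := vdiff01 Hc p1 Q; have := vdiff01 Hc p1 Q.-1; lia.
  have := @vdiff_mono c p1 q1 Q.-1 (fun k k1 => mdiff_ge0 p1 k (ltac:(lia)) k1) (ltac:(lia)).
  by rewrite vp1Q; have := vdiff01 Hc p1 q1; lia.
pose Pi i := [&& (1 <= i)%N, (i < P)%N & vdiff c i q1 == 0].
have exi : exists i, Pi i by exists p1; rewrite /Pi p11 vp1 eqxx; lia.
have ubi i : Pi i -> (i <= P)%N by case/and3P => _ /ltnW.
case: (ex_maxnP exi ubi) => i /and3P[i1 iP /eqP vi] imax.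
have hi : hdiff c i q1 = 0.
  have := @hdiff_mono c i q1 (P.-1 - i)%N; rewrite subnKC; last by lia.
  rewrite hq1 => H.
  have : hdiff c i q1 <= 0 by apply: H => i' /andP[a b]; apply: mdiff_ge0 => //; lia.
  by have := hdiff01 Hc i q1; lia.
have [eiP|neiP] := eqVneq i P.-1.
  have HB : Q = n.+1 \/ hdiff c i Q = 1 by right; rewrite eiP.
  have next_row k : (q1 <= k < Q)%N -> vdiff c i.+1 k = 1.
    by rewrite eiP prednK //; exact: rowP.
  have [k Hk] := @ess_pt_in_row i q1 Q (ltac:(lia)) q11 q1Q (ltac:(lia)) hi vi HB next_row.
  by exists i, k.
have iP' : (i.+1 < P)%N by lia.
have vi1 : vdiff c i.+1 q1 = 1.
  apply: vdiff1 => H.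
  by have := imax i.+1; rewrite /Pi iP' H eqxx /= => /(_ isT); rewrite ltnn.
have next_row k : (q1 <= k < n.+1)%N -> vdiff c i.+1 k = 1.
  move=> /andP[q1k _].
  have := @vdiff_mono c i.+1 q1 k (fun k k1 => mdiff_ge0 i.+1 k (ltac:(lia)) k1) q1k.
  by rewrite vi1; have := vdiff01 Hc i.+1 k; lia.
have [k Hk] := @ess_pt_in_row i q1 n.+1 (ltac:(lia)) q11 (ltac:(lia)) (leqnn _) hi vi
    (or_introl erefl) next_row.
by exists i, k.
Qed.

End CornerLike.

Lemma sum_ltS n (F : 'I_n -> int) (i0 : 'I_n) :
  \sum_(p < n | (p < i0.+1)%N) F p = \sum_(p < n | (p < i0)%N) F p + F i0.
Proof.
rewrite (bigD1 i0) //= addrC; congr (_ + _); apply: eq_bigl => p.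
by rewrite ltnS ltn_neqAle andbC.
Qed.

Lemma sum_ge n (F : 'I_n -> int) i : (n <= i)%N ->
  \sum_(p < n | (p < i)%N) F p = \sum_(p < n) F p.
Proof. by move=> ni; apply: eq_bigl => p; rewrite (leq_trans (ltn_ord p)). Qed.

Definition row_prefix n (A : 'M[int]_n) (p : 'I_n) (k : nat) : int :=
  \sum_(q < n | (q < k)%N) A p q.

Section CornerSums.
Variables (n : nat) (A : 'M[int]_n).

Lemma vdiff_cs (p : 'I_n) k : vdiff (cs A) p.+1 k = row_prefix A p k.
Proof. by rewrite /vdiff /cs sum_ltS /= addrC addKr. Qed.

Lemma cs_tr i k : cs A^T i k = cs A k i.
Proof.
rewrite /cs exchange_big; apply: eq_bigr => q _; apply: eq_bigr => p _.
by rewrite mxE.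
Qed.

Lemma hdiff_cs_tr i k : hdiff (cs A) i k = vdiff (cs A^T) k i.
Proof. by rewrite /hdiff /vdiff !cs_tr. Qed.

Lemma cs_row0 k : cs A 0 k = 0.
Proof. by rewrite /cs big1. Qed.

Lemma cs_col0 i : cs A i 0 = 0.
Proof. by rewrite /cs big1 // => p _; rewrite big1. Qed.

Lemma cs_ge i k : (n <= i)%N -> cs A i k = cs A n k.
Proof. by move=> ni; rewrite /cs !sum_ge. Qed.

Lemma mdiff_cs (p q : 'I_n) : mdiff (cs A) p.+1 q.+1 = A p q.
Proof. by rewrite /mdiff /= !vdiff_cs /row_prefix sum_ltS addrC addKr. Qed.

Hypothesis hA : is_asm A.

Lemma is_asm_tr : is_asm A^T.
Proof.
case: hA => h1 h2 h3 h4 h5; split=> *; rewrite ?mxE //.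
all: by under eq_bigr do rewrite mxE.
Qed.

Lemma row_prefix01 p k : row_prefix A p k = 0 \/ row_prefix A p k = 1.
Proof.
case: hA => _ h2 _ h4 _; rewrite /row_prefix.
case: k => [|k]; first by left; rewrite big1.
case: (ltnP k n) => kn; last by right; rewrite sum_ge ?h4 // (leq_trans kn).
have := h2 p (Ordinal kn).
rewrite (eq_bigl (fun q : 'I_n => (q < k.+1)%N)) => [|q]; last by rewrite ltnS.
by rewrite !inE => /orP[/eqP|/eqP]; [left|right].
Qed.

Lemma vdiff_cs01 i k : vdiff (cs A) i k = 0 \/ vdiff (cs A) i k = 1.
Proof.
case: i => [|i]; first by left; rewrite /vdiff subrr.
case: (ltnP i n) => iN.
  by rewrite -[i]/(val (Ordinal iN)) vdiff_cs; apply: row_prefix01.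
by left; rewrite /vdiff /= (cs_ge k iN) cs_ge ?subrr // (leq_trans iN).
Qed.

Lemma vdiff_cs_full i k : (1 <= i <= n)%N -> (n <= k)%N -> vdiff (cs A) i k = 1.
Proof.
case: i => [|i] // /andP[_ iN] nk; case: hA => _ _ _ h4 _.
by rewrite -[i]/(val (Ordinal iN)) vdiff_cs /row_prefix sum_ge.
Qed.

Lemma mdiff_cs_out i k : (1 <= i <= n)%N -> (n < k)%N -> mdiff (cs A) i k = 0.
Proof. by move=> Hi nk; rewrite /mdiff !vdiff_cs_full ?subrr //; lia. Qed.

End CornerSums.

Lemma corner_like_cs n (A : 'M[int]_n) : is_asm A -> corner_like n (cs A).
Proof.
move=> hA; have hAT := is_asm_tr hA; split.
- by move=> i k; rewrite hdiff_cs_tr; apply: vdiff_cs01.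
- exact: vdiff_cs01.
- exact: cs_row0.
- exact: cs_col0.
- exact: vdiff_cs_full.
- by move=> i k Hk Hi; rewrite hdiff_cs_tr; apply: vdiff_cs_full.
Qed.

(* The paper's essential points are exactly the points ess_pt of the corner
   sum (the essential-point conditions only involve the single cell (i,k)). *)
Lemma ess_ptE n (A : 'M[int]_n) i k : ess_pt n (cs A) i k <-> essential_point A i k.
Proof.
rewrite /ess_pt /essential_point /essential_rect /hdiff /vdiff; split.
  case=> /and3P[/andP[i1 iN] k1 kN] e1 e2 e3 e4; split.
    by rewrite i1 k1 !ltnSn iN kN.
  move=> p q /andP[ip pi] /andP[kq qk].
  rewrite (_ : p = i); last by lia.
  rewrite (_ : q = k); last by lia.
  by move: e1 e2 e3 e4 => /=; split; lia.
case=> /and5P[i1 _ iN k1 /andP[_ kN]] H.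
have [e1 e2 e3 e4] := H i k (ltac:(lia)) (ltac:(lia)).
split; first by rewrite i1 iN k1 kN.
all: by move: e1 e2 e3 e4 => /=; lia.
Qed.

Lemma essential_point_inord n (A : 'M[int]_n) i k : ess_pt n (cs A) i k ->
  essential_point A (inord i : 'I_n.+1) (inord k : 'I_n.+1).
Proof.
move=> H; have [/andP[/andP[_ iN] /andP[_ kN]] _ _ _ _] := H.
by rewrite !inordK -?ess_ptE //; lia.
Qed.

Lemma asm_entry n (A : 'M[int]_n) p q : is_asm A -> A p q = -1 \/ 0 <= A p q.
Proof.
by case=> h1 _ _ _ _; move: (h1 p q); rewrite !inE; case/or3P => /eqP ->; auto.
Qed.

(* An alternating sign matrix with a -1 entry has essential points in two
   different rows: take a -1 in the topmost row containing one; there are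
   essential points above it and in or below its row. *)
Lemma asm_neg_two_ess n (A : 'M[int]_n) p0 q0 : is_asm A -> A p0 q0 = -1 ->
  exists i1 k1 i2 k2, (i1 < i2)%N /\ ess_pt n (cs A) i1 k1 /\ ess_pt n (cs A) i2 k2.
Proof.
move=> hA A_neg; have Hc := corner_like_cs hA.
pose neg (x : 'I_n * 'I_n) := A x.1 x.2 == -1.
have neg0 : neg (p0, q0) by rewrite /neg A_neg.
case: (arg_minnP (fun x : 'I_n * 'I_n => val x.1) neg0) => -[p q] /eqP /= Apq pmin.
have He : mdiff (cs A) p.+1 q.+1 = -1 by rewrite mdiff_cs.
have above_ge0 i k : (1 <= i < p.+1)%N -> (1 <= k)%N -> 0 <= mdiff (cs A) i k.
  case: i => [|i] // /andP[_ ip] k1.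
  have iN : (i < n)%N by have := ltn_ord p; lia.
  case: (ltnP n k) => nk; first by rewrite mdiff_cs_out //; lia.
  case: k k1 nk => [|k] // _ kN.
  rewrite -[i]/(val (Ordinal iN)) -[k]/(val (Ordinal kN)) mdiff_cs.
  case: (asm_entry (Ordinal iN) (Ordinal kN) hA) => // H.
  by have := pmin (Ordinal iN, Ordinal kN); rewrite /neg /= H eqxx => /(_ isT); lia.
have Pn : (1 <= p.+1 <= n)%N by rewrite ltn_ord.
have Qn : (1 <= q.+1 <= n)%N by rewrite ltn_ord.
have [i1 [k1 [i1p E1]]] := ess_pt_above Hc Pn Qn He above_ge0.
have [i2 [k2 [pi2 E2]]] := ess_pt_below Hc Pn Qn He.
by exists i1, k1, i2, k2; split => //; apply: leq_trans i1p pi2.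
Qed.

Lemma unique_ess_nonneg n (A : 'M[int]_n) : is_asm A ->
  (exists! ik : 'I_n.+1 * 'I_n.+1, essential_point A ik.1 ik.2) ->
  forall p q, 0 <= A p q.
Proof.
move=> hA [ik [_ ik_uniq]] p q.
case: (asm_entry p q hA) => // A_neg; exfalso.
have [i1 [k1 [i2 [k2 [i12 [E1 E2]]]]]] := asm_neg_two_ess hA A_neg.
have := etrans (esym (ik_uniq (inord i1, inord k1) (essential_point_inord E1)))
               (ik_uniq (inord i2, inord k2) (essential_point_inord E2)).
move=> /(congr1 (fun x => val x.1)) /=.
have [/andP[/andP[_ i1N] _] _ _ _ _] := E1.
have [/andP[/andP[_ i2N] _] _ _ _ _] := E2.
by rewrite !inordK; lia.
Qed.

Lemma perm_mx_entry n (s : 'S_n) i j : (perm_mx s : 'M[int]_n) i j = (s i == j)%:R.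
Proof. by rewrite perm_mxEsub !mxE. Qed.

Lemma sum1_single n (F : 'I_n -> int) j0 : (forall j, 0 <= F j) ->
  \sum_j F j = 1 -> F j0 = 1 -> forall j, j != j0 -> F j = 0.
Proof.
move=> F_ge0 F_sum F1 j nj.
have rest0 : \sum_(i | i != j0) F i = 0.
  by move: F_sum; rewrite (bigD1 j0) //= F1 => /eqP; rewrite -{2}[1]addr0 => /eqP /addrI.
by have := psumr_eq0P (fun i _ => F_ge0 i) rest0 => /(_ j); rewrite nj; apply.
Qed.

Lemma nonneg_asm_perm n (A : 'M[int]_n) : is_asm A -> (forall p q, 0 <= A p q) ->
  exists w : 'S_n, A = perm_mx w.
Proof.
move=> hA A_ge0; case: (hA) => h1 _ _ h4 h5.
have row_has1 p : exists q, A p q = 1.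
  suff /existsP[q /eqP] : [exists q, A p q == 1] by exists q.
  case: (boolP [exists q, A p q == 1]) => // /existsPn none1; exfalso.
  have : \sum_q A p q = 0.
    apply: big1 => q _; have := none1 q; have := A_ge0 p q; move: (h1 p q).
    by rewrite !inE; case/or3P => /eqP ->.
  by rewrite h4 => /eqP; rewrite oner_eq0.
pose f p := odflt p [pick q | A p q == 1].
have fP p : A p (f p) = 1.
  rewrite /f; case: pickP => [q /eqP //|H].
  by have [q Hq] := row_has1 p; have := H q; rewrite Hq eqxx.
have f_inj : injective f.
  move=> p p' e; apply/eqP/negPn/negP => ne.
  have := @sum1_single _ (fun i => A i (f p)) p (fun i => A_ge0 _ _) (h5 _) (fP p) p'.
  by rewrite eq_sym ne e fP => /(_ isT) /eqP; rewrite oner_eq0.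
exists (perm f_inj); apply/matrixP => p q; rewrite perm_mx_entry permE.
have [<-|ne] := eqVneq (f p) q; first by rewrite fP.
by rewrite (@sum1_single _ (A p) (f p) (A_ge0 p) (h4 _) (fP p) q) // eq_sym.
Qed.

(* A permutation of 'I_n as a function on nat (0 outside [0, n)), so that
   descents and essential points can be phrased in nat arithmetic. *)
Definition perm_nat n (s : 'S_n) (x : nat) : nat :=
  odflt 0%N (omap (fun p : 'I_n => val (s p)) (insub x)).

Lemma perm_natE n (s : 'S_n) (p : 'I_n) : perm_nat s p = s p.
Proof. by rewrite /perm_nat valK. Qed.

Lemma perm_nat_lt n (s : 'S_n) x : (x < n)%N -> (perm_nat s x < n)%N.
Proof. by move=> xn; rewrite -[x]/(val (Ordinal xn)) perm_natE. Qed.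

Lemma perm_natK n (s : 'S_n) x : (x < n)%N -> perm_nat s^-1 (perm_nat s x) = x.
Proof. by move=> xn; rewrite -[x]/(val (Ordinal xn)) !perm_natE permK. Qed.

Lemma vdiff_perm n (w : 'S_n) x k : (x < n)%N ->
  vdiff (cs (perm_mx w : 'M[int]_n)) x.+1 k = (perm_nat w x < k)%:R.
Proof.
move=> xn; rewrite -[x]/(val (Ordinal xn)) vdiff_cs perm_natE /row_prefix.
under eq_bigr do rewrite perm_mx_entry.
case: (ltnP (w (Ordinal xn)) k) => h.
  rewrite (bigD1 (w (Ordinal xn))) //= eqxx big1 ?addr0 // => q /andP[_ ne].
  by rewrite eq_sym (negbTE ne).
by rewrite big1 // => q qk; case: eqP => // e; move: qk; rewrite -e ltnNge h.
Qed.

Lemma hdiff_perm n (w : 'S_n) i k : (k < n)%N ->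
  hdiff (cs (perm_mx w : 'M[int]_n)) i k.+1 = (perm_nat w^-1 k < i)%:R.
Proof. by move=> kn; rewrite hdiff_cs_tr tr_perm_mx vdiff_perm. Qed.

Definition perm_ess (n : nat) (W Wi : nat -> nat) (i k : nat) : Prop :=
  [/\ (1 <= i < n)%N && (1 <= k < n)%N, (i <= Wi k.-1)%N, (Wi k < i)%N,
      (k <= W i.-1)%N & (W i < k)%N].

Lemma ess_pt_permE n (w : 'S_n) i k :
  ess_pt n (cs (perm_mx w : 'M[int]_n)) i k <-> perm_ess n (perm_nat w) (perm_nat w^-1) i k.
Proof.
rewrite /ess_pt /perm_ess.
case: (boolP ((1 <= i < n)%N && (1 <= k < n)%N)) => [B|_]; last by split => -[].
move: (B) => /andP[/andP[i1 iN] /andP[k1 kN]].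
case: i i1 iN B => [|i] // _ iN B; case: k k1 kN B => [|k] // _ kN B.
have iN' : (i < n)%N by apply: ltnW.
have kN' : (k < n)%N by apply: ltnW.
rewrite !hdiff_perm // !vdiff_perm //=.
by do 4!case: ltnP => _; split; case.
Qed.
Lemma perm_ess_sym n W Wi i k : perm_ess n W Wi i k -> perm_ess n Wi W k i.
Proof. by case=> /andP[a b] *; split; rewrite // b a. Qed.

Definition descent (n : nat) (W : nat -> nat) (d : nat) : bool :=
  (d.+1 < n)%N && (W d.+1 < W d)%N.

Lemma perm_ess_descent n W Wi i k : perm_ess n W Wi i k ->
  descent n W i.-1 /\ descent n Wi k.-1.
Proof.
case=> /andP[/andP[i1 iN] /andP[k1 kN]] H1 H2 H3 H4.
by rewrite /descent !prednK //; split; apply/andP; split => //; lia.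
Qed.

(* Every descent d of w is the row of an essential point: take the largest
   value j in [w(d+1), w(d)) with w^-1(j) > d; then k = j + 1 works. *)
Lemma descent_perm_ess n (s : 'S_n) d : descent n (perm_nat s) d ->
  exists k, perm_ess n (perm_nat s) (perm_nat s^-1) d.+1 k.
Proof.
move=> /andP[dn lt].
pose Pj j := [&& (perm_nat s d.+1 <= j)%N, (j < perm_nat s d)%N & (d < perm_nat s^-1 j)%N].
have exj : exists j, Pj j by exists (perm_nat s d.+1); rewrite /Pj leqnn lt perm_natK // ltnSn.
have ubj j : Pj j -> (j <= perm_nat s d)%N by case/and3P => _ /ltnW.
case: (ex_maxnP exj ubj) => j /and3P[j1 j2 j3] jmax.
have sd : (perm_nat s d < n)%N by apply: perm_nat_lt; lia.
have range : (1 <= d.+1 < n)%N && (1 <= j.+1 < n)%N by rewrite dn /=; lia.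
exists j.+1; split => //=.
have [e|ne] := eqVneq j.+1 (perm_nat s d); first by rewrite e perm_natK //; lia.
rewrite ltnS leqNgt; apply/negP => H.
have : Pj j.+1 by rewrite /Pj H andbT; apply/andP; split; lia.
by move/jmax; rewrite ltnn.
Qed.

Lemma num_descents1 n (s : 'S_n) :
  num_descents s = 1%N <-> exists! d, descent n (perm_nat s) d.
Proof.
rewrite /num_descents; set S := [set p : 'I_n * 'I_n | _]; split.
  move/eqP/cards1P => [[a b] S1].
  have : (a, b) \in S by rewrite S1 set11.
  rewrite inE /= => /andP[/eqP ba lt].
  exists a; split; first by rewrite /descent -ba !perm_natE ltn_ord lt.
  move=> d' /andP[dn lt'].
  have dn' : (d' < n)%N by lia.
  have : (Ordinal dn', Ordinal dn) \in S by rewrite inE /= eqxx -!perm_natE.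
  by rewrite S1 in_set1 => /eqP [] <-.
move=> [d [/andP[dn lt] d_uniq]].
have dn' : (d < n)%N by lia.
apply/eqP/cards1P; exists (Ordinal dn', Ordinal dn); apply/setP => -[a b].
rewrite !inE /=; apply/idP/idP.
  move=> /andP[/eqP ba lt'].
  have ad : d = val a by apply: d_uniq; rewrite /descent -ba ltn_ord !perm_natE.
  by apply/eqP; congr pair; apply: val_inj; rewrite /= ?ba ad.
by move=> /eqP [] -> -> /=; rewrite eqxx -!perm_natE.
Qed.

Lemma unique_pair_iff_unique_projections (E : nat -> nat -> Prop) (D1 D2 : nat -> Prop) :
  (forall d, D1 d <-> exists e, E d e) -> (forall e, D2 e <-> exists d, E d e) ->
  ((exists! d, D1 d) /\ (exists! e, D2 e)) <-> exists! de : nat * nat, E de.1 de.2.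
Proof.
move=> D1E D2E; split.
  move=> [[d [Dd d_uniq]] [e [De e_uniq]]].
  have [e' Ede'] := (D1E d).1 Dd.
  have ee' : e = e' by apply/e_uniq/D2E; exists d.
  subst e'.
  exists (d, e); split => // -[d' e''] /= Ede''.
  by rewrite (d_uniq d') ?(e_uniq e'') //; [apply/D2E; exists d' | apply/D1E; exists e''].
move=> [[d e] [/= Ede de_uniq]]; split.
  exists d; split; first by apply/D1E; exists e.
  by move=> d' /D1E [e' /(de_uniq (d', e')) []].
exists e; split; first by apply/D2E; exists d.
by move=> e' /D2E [d' /(de_uniq (d', e')) []].
Qed.

Lemma perm_ess_rows n (w : 'S_n) d : descent n (perm_nat w) d <->
  exists e, ess_pt n (cs (perm_mx w : 'M[int]_n)) d.+1 e.+1.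
Proof.
split => [/descent_perm_ess [k Ek] | [e /ess_pt_permE /perm_ess_descent []] //].
have [/andP[_ /andP[k1 _]] _ _ _ _] := Ek.
by exists k.-1; rewrite prednK //; apply/ess_pt_permE.
Qed.

Lemma perm_ess_cols n (w : 'S_n) e : descent n (perm_nat w^-1) e <->
  exists d, ess_pt n (cs (perm_mx w : 'M[int]_n)) d.+1 e.+1.
Proof.
split => [/descent_perm_ess [i] | [d /ess_pt_permE /perm_ess_descent []] //].
rewrite invgK => /perm_ess_sym Ei; have [/andP[/andP[i1 _] _] _ _ _ _] := Ei.
by exists i.-1; rewrite prednK //; apply/ess_pt_permE.
Qed.

Lemma bigrassmannian_unique_ess n (w : 'S_n) : bigrassmannian w <->
  exists! de : nat * nat, ess_pt n (cs (perm_mx w : 'M[int]_n)) de.1.+1 de.2.+1.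
Proof.
pose E d e := ess_pt n (cs (perm_mx w : 'M[int]_n)) d.+1 e.+1.
have := unique_pair_iff_unique_projections (E := E) (perm_ess_rows w) (perm_ess_cols w).
by rewrite /bigrassmannian !num_descents1.
Qed.

Lemma unique_essential_pointE n (A : 'M[int]_n) :
  (exists! ik : 'I_n.+1 * 'I_n.+1, essential_point A ik.1 ik.2) <->
  exists! de : nat * nat, ess_pt n (cs A) de.1.+1 de.2.+1.
Proof.
split.
  move=> [[i k] [/= /ess_ptE Eik ik_uniq]].
  have [/andP[/andP[i1 _] /andP[k1 _]] _ _ _ _] := Eik.
  exists (i.-1, k.-1); split => [|[d e] /= Ede]; first by rewrite /= !prednK.
  have [/andP[/andP[_ dn] /andP[_ en]] _ _ _ _] := Ede.
  have [-> ->] := ik_uniq (inord d.+1, inord e.+1) (essential_point_inord Ede).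
  by rewrite !inordK //; lia.
move=> [[d e] [/= Ede de_uniq]].
exists (inord d.+1, inord e.+1); split; first exact: essential_point_inord.
move=> [i k] /= /ess_ptE Eik; have [/andP[/andP[i1 iN] /andP[k1 kN]] _ _ _ _] := Eik.
have := de_uniq (i.-1, k.-1); rewrite /= !prednK // => /(_ Eik) [-> ->].
by congr pair; apply: val_inj; rewrite /= inordK //; lia.
Qed.

Unset Implicit Arguments.

Theorem mainTheorem8 (n : nat) (A : 'M[int]_n) (hA : is_asm A) :
  (exists w : 'S_n, bigrassmannian w /\ A = perm_mx w) <->
  (exists! ik : 'I_n.+1 * 'I_n.+1, essential_point A ik.1 ik.2).
Proof.
split=> [[w [w_bigr ->]] | ess1].
  by apply/unique_essential_pointE/bigrassmannian_unique_ess.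
have [w Aw] := nonneg_asm_perm hA (unique_ess_nonneg hA ess1).
exists w; split => //.
by apply/bigrassmannian_unique_ess/unique_essential_pointE; rewrite -Aw.
Qed.
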